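(* For every $n\ge1$ let $f(n)$ be the minimum of $\Phi(T)$ over all binary phylogenetic trees $T$ with $n$ leaves. Then $f(1)=f(2)=0$ and, for every $n\ge 3$, $$f(n)=f(\lceil n/2\rceil)+f(\lfloor n/2\rfloor)+\binom{\lceil n/2\rceil}{2}+\binom{\lfloor n/2\rfloor}{2}.$$
   Context: A phylogenetic tree with $n$ leaves is a rooted tree whose leaves are bijectively labeled by $\{1,\dots,n\}$; binary means every internal node has exactly two children (the one-leaf tree is a single node). The depth $\delta_T(v)$ is the number of arcs from the root to $v$; for leaves $i,j$, $\varphi_T(i,j)=\delta_T(LCA_T(i,j))$ ($LCA$ = lowest common ancestor), and $\Phi(T)=\sum_{1\le i<j\le n}\varphi_T(i,j)$ is the total cophenetic index. *)

From mathcomp Require Import all_boot.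
Set Implicit Arguments. Unset Strict Implicit. Unset Printing Implicit Defensive.

Inductive btree : Type :=
| Leaf of nat
| Node of btree & btree.

Fixpoint leaves (T : btree) : seq nat :=
  match T with
  | Leaf l => [:: l]
  | Node L R => leaves L ++ leaves R
  end.

Definition binary_phylo (n : nat) (T : btree) : Prop :=
  perm_eq (leaves T) (iota 1 n).

(* phi T i j = depth (number of arcs from the root) of LCA_T(i,j). *)
Fixpoint phi (T : btree) (i j : nat) : nat :=
  match T with
  | Leaf _ => 0
  | Node L R =>
      if (i \in leaves L) && (j \in leaves L) then (phi L i j).+1
      else if (i \in leaves R) && (j \in leaves R) then (phi R i j).+1
      else 0
  end.

Definition Phi (T : btree) : nat :=
  let n := size (leaves T) in
  \sum_(1 <= i < n.+1) \sum_(i.+1 <= j < n.+1) phi T i j.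

Definition is_min_Phi (n m : nat) : Prop :=
  (exists T, binary_phylo n T /\ Phi T = m) /\
  (forall T, binary_phylo n T -> m <= Phi T).

From mathcomp Require Import all_boot zify.
Set Implicit Arguments. Unset Strict Implicit. Unset Printing Implicit Defensive.

(* The cophenetic index of a binary tree satisfies the recursion
     Phi (Node L R) = Phi L + Phi R + C(|L|, 2) + C(|R|, 2),
   since each pair of leaves below a child of the root gains one unit of
   depth.  Hence the minimum obeys f(n) = min_{a+b=n} H(a) + H(b) with
   H(a) = f(a) + C(a, 2), and the theorem says that the balanced split
   a = ceil(n/2), b = floor(n/2) is always optimal.

   A general lemma shows that for any
   discretely convex h the balanced split minimises h(a) + h(b).  We then
   define [bal n] by the balanced recursion and prove by strong induction
   that H(n) = bal n + C(n, 2) is convex. *)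

Lemma halves n : n./2 + uphalf n = n /\ n./2 <= uphalf n <= n./2.+1.
Proof.
have := odd_double_half n; rewrite uphalf_half -addnn.
by case: (odd n) => /=; lia.
Qed.

Lemma bin2S k : 'C(k.+1, 2) = 'C(k, 2) + k.
Proof. by rewrite binS bin1. Qed.

Lemma bin2_convex n : 'C(n, 2) + 'C(n.+2, 2) = 2 * 'C(n.+1, 2) + 1.
Proof. by rewrite !bin2S; lia. Qed.

Section Balancing.

Variable h : nat -> nat.
Hypothesis h_convex : forall n, 1 <= n -> 2 * h n.+1 <= h n + h n.+2.

(* Moving a point inward (from (a, a+m+1) to (a+1, a+m)) does not increase
   h(a) + h(b): the increments of h are nondecreasing. *)
Lemma convex_exchange a m : 1 <= a -> h a.+1 + h (a + m) <= h a + h (a + m).+1.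
Proof.
move=> a_gt0; elim: m => [|m IH]; first by rewrite addn0; lia.
by have := h_convex (leq_trans a_gt0 (leq_addr m a)); rewrite addnS; lia.
Qed.

Lemma convex_balance a b : 1 <= a -> 1 <= b ->
  h (uphalf (a + b)) + h (a + b)./2 <= h a + h b.
Proof.
wlog le_ab : a b / a <= b => [hw a_gt0 b_gt0|].
  case: (leqP a b) => [/hw|lt_ba]; first exact.
  by rewrite (addnC a b) (addnC (h a)); apply: hw => //; exact: ltnW lt_ba.
elim/ltn_ind: b a le_ab => b IH a le_ab a_gt0 b_gt0.
have [sum_ab le_ab2] := halves (a + b).
have [b_le|b_gt] := leqP b a.+1.
  have uphalf_ab : uphalf (a + b) = b by lia.
  have half_ab : (a + b)./2 = a by lia.
  by rewrite uphalf_ab half_ab addnC.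
have := convex_exchange (b.-1 - a) a_gt0.
have sum_b : a + (b.-1 - a) = b.-1 by lia.
rewrite sum_b prednK; last lia.
have := IH b.-1 ltac:(lia) a.+1 ltac:(lia) ltac:(lia) ltac:(lia).
have sum_a : a.+1 + b.-1 = a + b by lia.
rewrite sum_a; lia.
Qed.

End Balancing.

(* [bal n] is the value of the balanced recursion; it is defined with an
   explicit fuel [k], which is irrelevant as soon as k >= n. *)
Fixpoint bal_fuel (k n : nat) : nat :=
  if k is k'.+1 then
    if n <= 1 then 0
    else bal_fuel k' (uphalf n) + bal_fuel k' n./2 + 'C(uphalf n, 2) + 'C(n./2, 2)
  else 0.

Definition bal (n : nat) : nat := bal_fuel n n.

Lemma bal_fuel_enough k1 k2 n : n <= k1 -> n <= k2 -> bal_fuel k1 n = bal_fuel k2 n.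
Proof.
elim: k1 k2 n => [|k1 IH] [|k2] n //= hn1 hn2; try by have -> : n = 0 by lia.
case: ifP => // /negbT; rewrite -ltnNge => n_gt1; have [sum_n le_n] := halves n.
by rewrite (IH k2 (uphalf n)) ?(IH k2 n./2) //; lia.
Qed.

Lemma bal_rec n : 2 <= n ->
  bal n = bal (uphalf n) + bal n./2 + 'C(uphalf n, 2) + 'C(n./2, 2).
Proof.
case: n => [|n] //= n_gt1; rewrite /bal /= ifN; last by rewrite -ltnNge.
have [sum_n le_n] := halves n.+1.
by rewrite (@bal_fuel_enough n (uphalf n.+1)) ?(@bal_fuel_enough n n.+1./2) //; lia.
Qed.

(* [Hbal n] is the cost of the balanced tree on n leaves hung below one more
   edge: every pair of its leaves then counts one extra unit of depth. *)
Definition Hbal (n : nat) : nat := bal n + 'C(n, 2).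

Lemma bal_split n : 2 <= n -> bal n = Hbal (uphalf n) + Hbal n./2.
Proof. by move=> n_gt1; rewrite bal_rec // /Hbal; lia. Qed.

Lemma Hbal_rec n : 2 <= n -> Hbal n = Hbal (uphalf n) + Hbal n./2 + 'C(n, 2).
Proof. by move=> n_gt1; rewrite {1}/Hbal bal_split. Qed.

Lemma Hbal_double k : 1 <= k -> Hbal (k + k) = Hbal k + Hbal k + 'C(k + k, 2).
Proof.
move=> k_gt0; have [sum_n le_n] := halves (k + k).
have half_kk : (k + k)./2 = k by lia.
have uphalf_kk : uphalf (k + k) = k by lia.
by rewrite (@Hbal_rec (k + k)) ?half_kk ?uphalf_kk //; lia.
Qed.

Lemma Hbal_doubleS k : 1 <= k ->
  Hbal (k + k).+1 = Hbal k.+1 + Hbal k + 'C((k + k).+1, 2).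
Proof.
move=> k_gt0; have [sum_n le_n] := halves (k + k).+1.
have half_kk : (k + k).+1./2 = k by lia.
have uphalf_kk : uphalf (k + k).+1 = k.+1 by lia.
by rewrite (@Hbal_rec (k + k).+1) ?half_kk ?uphalf_kk //; lia.
Qed.

(* At 2k the second difference is
   that of C(n, 2) (the recursion pairs off identically), and at 2k+1 it is
   the second difference of [Hbal] at k plus one, so strong induction
   applies. *)
Lemma Hbal_convex n : 1 <= n -> 2 * Hbal n.+1 <= Hbal n + Hbal n.+2.
Proof.
elim/ltn_ind: n => n IH n_gt0.
have [k n_eq] : exists k, n = k + k \/ n = (k + k).+1.
  exists n./2; have [sum_n le_n] := halves n; lia.
have kk2 m : (m + m).+2 = m.+1 + m.+1 by rewrite addnS addSn.
case: n_eq => n_eq; subst n.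
- have k_gt0 : 1 <= k by lia.
  have := bin2_convex (k + k).
  rewrite Hbal_doubleS // kk2 Hbal_double // Hbal_double // -kk2; lia.
- have [-> // | k_gt0] := posnP k.
  have := IH k ltac:(lia) ltac:(lia).
  have := bin2_convex (k + k).+1.
  rewrite Hbal_doubleS // kk2 Hbal_double // Hbal_doubleS //; lia.
Qed.

Fixpoint cophen_rec (T : btree) : nat :=
  match T with
  | Leaf _ => 0
  | Node L R =>
      cophen_rec L + cophen_rec R + 'C(size (leaves L), 2) + 'C(size (leaves R), 2)
  end.

Lemma size_leaves_gt0 T : 0 < size (leaves T).
Proof. by elim: T => //= L L_gt0 R _; rewrite size_cat addn_gt0 L_gt0. Qed.

Lemma bal_le_cophen_rec T : bal (size (leaves T)) <= cophen_rec T.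
Proof.
elim: T => [//|L IHL R IHR] /=.
have L_gt0 := size_leaves_gt0 L; have R_gt0 := size_leaves_gt0 R.
rewrite size_cat bal_split; last lia.
have := convex_balance Hbal_convex L_gt0 R_gt0.
rewrite /Hbal; lia.
Qed.

Fixpoint bal_tree (k lo n : nat) : btree :=
  if k is k'.+1 then
    if n <= 1 then Leaf lo
    else Node (bal_tree k' lo (uphalf n)) (bal_tree k' (lo + uphalf n) n./2)
  else Leaf lo.

Lemma bal_tree_spec k lo n : 1 <= n -> n <= k ->
  leaves (bal_tree k lo n) = iota lo n /\ cophen_rec (bal_tree k lo n) = bal n.
Proof.
elim: k lo n => [|k IH] lo n n_gt0 n_le; first lia.
rewrite /=; case: ifP => [n_le1|/negbT]; first by have -> : n = 1 by lia.
rewrite -ltnNge => n_gt1; have [sum_n le_n] := halves n.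
have [leavesL costL] := IH lo (uphalf n) ltac:(lia) ltac:(lia).
have [leavesR costR] := IH (lo + uphalf n) n./2 ltac:(lia) ltac:(lia).
rewrite /= leavesL leavesR costL costR !size_iota -iotaD (bal_split n_gt1) /Hbal.
by split; [congr iota | ]; lia.
Qed.

Lemma phi_out T i j : ~~ ((i \in leaves T) && (j \in leaves T)) -> phi T i j = 0.
Proof.
case: T => //= L R; rewrite !mem_cat => not_in.
case: ifP => [/andP [iL jL] | _]; first by rewrite iL jL in not_in.
by case: ifP => // /andP [iR jR]; rewrite iR jR !orbT in not_in.
Qed.

Lemma phi_node L R i j : uniq (leaves L ++ leaves R) ->
  phi (Node L R) i j = phi L i j + phi R i j
    + ((i \in leaves L) && (j \in leaves L)) + ((i \in leaves R) && (j \in leaves R)).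
Proof.
rewrite cat_uniq => /and3P [_ /hasPn disjLR _] /=.
case: ifP => [/andP [iL jL] | inL].
  have iR : i \notin leaves R by apply: contraL iL => /disjLR.
  by rewrite (@phi_out R) ?(negbTE iR) //= !addn0 addn1.
rewrite (@phi_out L); last by rewrite inL.
case: ifP => inR /=; first by rewrite add0n !addn0 addn1.
by rewrite (@phi_out R) // inR.
Qed.

Definition pair_sum (F : nat -> nat -> nat) (N : nat) : nat :=
  \sum_(1 <= i < N.+1) \sum_(i.+1 <= j < N.+1) F i j.

Lemma pair_sumD F G N :
  pair_sum (fun i j => F i j + G i j) N = pair_sum F N + pair_sum G N.
Proof. by rewrite /pair_sum -big_split; apply: eq_bigr => i _; rewrite big_split. Qed.

Lemma pair_sumS F N : pair_sum F N.+1 = pair_sum F N + \sum_(1 <= i < N.+1) F i N.+1.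
Proof.
rewrite /pair_sum big_nat_recr //= [X in _ + X]big_geq // addn0 -big_split /=.
by apply: eq_big_nat => i /andP [_ lt_iN]; rewrite big_nat_recr.
Qed.

Lemma pair_sum_mem (s : seq nat) N :
  pair_sum (fun i j => (i \in s) && (j \in s)) N = 'C(count (mem s) (iota 1 N), 2).
Proof.
elim: N => [|N IH]; first by rewrite /pair_sum big_geq.
have iota_last : iota 1 N.+1 = iota 1 N ++ [:: N.+1].
  by rewrite -(addn1 N) iotaD add1n addn1.
rewrite pair_sumS IH iota_last count_cat /= addn0.
case: (N.+1 \in s) => /=.
- rewrite addn1 bin2S -sum1_count; congr (_ + _).
  rewrite big_mkcond [RHS]big_mkcond /= /index_iota subn1 /=.
  by apply: eq_bigr => i _; rewrite andbT.
- by rewrite big1 ?addn0 // => i _; rewrite andbF.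
Qed.

Lemma count_mem_iota (s : seq nat) N : uniq s -> all (fun x => 0 < x <= N) s ->
  count (mem s) (iota 1 N) = size s.
Proof.
move=> uniq_s /allP s_range; rewrite -size_filter; apply: perm_size.
apply: uniq_perm => //; first exact/filter_uniq/iota_uniq.
move=> x; rewrite mem_filter mem_iota andbC.
apply/andP/idP => [[] //|sx]; split => //.
by have := s_range x sx; rewrite add1n ltnS.
Qed.

Lemma pair_sum_phi T N : uniq (leaves T) -> all (fun x => 0 < x <= N) (leaves T) ->
  pair_sum (phi T) N = cophen_rec T.
Proof.
elim: T => [?|L IHL R IHR] uniq_T range_T.
  by rewrite /pair_sum big1 // => i _; rewrite big1.
have [uniqL uniqR] : uniq (leaves L) /\ uniq (leaves R).
  by move: uniq_T; rewrite /= cat_uniq => /and3P [-> _ ->].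
have [rangeL rangeR] : all (fun x => 0 < x <= N) (leaves L) /\
                       all (fun x => 0 < x <= N) (leaves R).
  by apply/andP; rewrite -all_cat.
rewrite /pair_sum; under eq_bigr => i _ do under eq_bigr => j _ do rewrite phi_node //.
by rewrite -/(pair_sum _ N) !pair_sumD IHL // IHR // !pair_sum_mem !count_mem_iota.
Qed.

Lemma Phi_cophen_rec n T : binary_phylo n T ->
  size (leaves T) = n /\ Phi T = cophen_rec T.
Proof.
move=> phylo_T; have size_T : size (leaves T) = n by rewrite (perm_size phylo_T) size_iota.
split => //; apply: pair_sum_phi; first by rewrite (perm_uniq phylo_T) iota_uniq.
by apply/allP => x; rewrite (perm_mem phylo_T) mem_iota size_T add1n ltnS.
Qed.

Lemma bal_is_min n : 1 <= n -> is_min_Phi n (bal n).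
Proof.
move=> n_gt0; have [leaves_B cost_B] := bal_tree_spec 1 n_gt0 (leqnn n).
have phylo_B : binary_phylo n (bal_tree n 1 n) by rewrite /binary_phylo leaves_B.
split; first by exists (bal_tree n 1 n); have [_ ->] := Phi_cophen_rec phylo_B; rewrite cost_B.
move=> T phylo_T; have [<- ->] := Phi_cophen_rec phylo_T.
exact: bal_le_cophen_rec.
Qed.

Lemma is_min_Phi_unique n m1 m2 : is_min_Phi n m1 -> is_min_Phi n m2 -> m1 = m2.
Proof.
move=> [[T1 [phylo1 <-]] min1] [[T2 [phylo2 <-]] min2].
by apply/eqP; rewrite eqn_leq min1 // min2.
Qed.

Theorem mainTheorem11 :
  (exists f : nat -> nat, forall n, 1 <= n -> is_min_Phi n (f n)) /\
  (forall f : nat -> nat, (forall n, 1 <= n -> is_min_Phi n (f n)) ->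
     [/\ f 1 = 0, f 2 = 0 &
      forall n, 3 <= n ->
        f n = f (uphalf n) + f n./2 + 'C(uphalf n, 2) + 'C(n./2, 2)]).
Proof.
split; first by exists bal; exact: bal_is_min.
move=> f f_min.
have f_bal n : 1 <= n -> f n = bal n.
  by move=> n_gt0; apply: is_min_Phi_unique (f_min n n_gt0) (bal_is_min n_gt0).
split; rewrite ?f_bal // => n n_ge3; have [sum_n le_n] := halves n.
rewrite !f_bal ?(bal_rec (n := n)) //; lia.
Qed.
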